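(* Let $M,N$ be finitary matroids on a common ground set $E$ and let $A\subseteq E$. Then every $(M\setminus A,N/A)$-hindrance is also an $(M,N)$-hindrance.
   Context: For $X\subseteq E$, $N.X:=N/(E\setminus X)$. For an ordered pair $(M,N)$ of finitary matroids on a common ground set, an $(M,N)$-hindrance is a set $H$ that is independent but not spanning in the matroid $N.\mathsf{span}_M(H)$, where $\mathsf{span}_M$ is the closure operator of $M$. $M\setminus A$ is deletion and $N/A$ is contraction of $A$ (both matroids on $E\setminus A$). *)

(* sets are predicates T -> Prop over an arbitrary (possibly
   infinite) type T; a matroid carries its own ground set. *)
From Stdlib Require Import List.

Set Implicit Arguments.

Definition pset (T : Type) := T -> Prop.

Section Matroids.
Variable T : Type.

Definition sub (X Y : pset T) : Prop := forall x, X x -> Y x.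
Definition setU (X Y : pset T) : pset T := fun x => X x \/ Y x.
Definition setD (X Y : pset T) : pset T := fun x => X x /\ ~ Y x.
Definition add1 (X : pset T) (e : T) : pset T := fun x => X x \/ x = e.

Definition is_finite (X : pset T) : Prop :=
  exists l : list T, forall x, X x -> In x l.

Definition is_maximal (P : pset T -> Prop) (X : pset T) : Prop :=
  P X /\ forall Y, P Y -> sub X Y -> sub Y X.

Record setsys := SetSys { ground : pset T; indep : pset T -> Prop }.

(* Matroid axioms (I1)-(I4) of Bruhn, Diestel, Kriesell, Pendavingh, Wollan. *)
Definition is_matroid (M : setsys) : Prop :=
  (forall I, indep M I -> sub I (ground M)) /\
  indep M (fun _ => False) /\
  (forall I J, indep M J -> sub I J -> indep M I) /\
  (forall I B, indep M I -> ~ is_maximal (indep M) I ->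
     is_maximal (indep M) B ->
     exists x, B x /\ ~ I x /\ indep M (add1 I x)) /\
  (forall I X, indep M I -> sub I X -> sub X (ground M) ->
     exists J, is_maximal (fun J => indep M J /\ sub I J /\ sub J X) J).

Definition finitary_matroid (M : setsys) : Prop :=
  is_matroid M /\
  forall I, sub I (ground M) ->
    (forall F, sub F I -> is_finite F -> indep M F) -> indep M I.

Definition span (M : setsys) (X : pset T) : pset T :=
  fun x => X x \/
    (ground M x /\ exists I, sub I X /\ indep M I /\ ~ indep M (add1 I x)).

Definition spanning (M : setsys) (X : pset T) : Prop :=
  forall x, ground M x -> span M X x.

Definition deletion (M : setsys) (A : pset T) : setsys :=
  SetSys (setD (ground M) A)
         (fun I => sub I (setD (ground M) A) /\ indep M I).

Definition contraction (N : setsys) (A : pset T) : setsys :=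
  SetSys (setD (ground N) A)
         (fun I => sub I (setD (ground N) A) /\
            exists J, is_maximal (fun J => indep N J /\ sub J A) J /\
                      indep N (setU I J)).

(* N.X := N / (E \ X) *)
Definition dotrestr (N : setsys) (X : pset T) : setsys :=
  contraction N (setD (ground N) X).

Definition hindrance (M N : setsys) (H : pset T) : Prop :=
  indep (dotrestr N (span M H)) H /\
  ~ spanning (dotrestr N (span M H)) H.

End Matroids.

From Stdlib Require Import List Classical ClassicalEpsilon Lia.

(* Let S = span_M H and S' = span_{M\A} H; then S' is contained in S.  The matroid
   (N/A).S' is N contracted by A + ((E\A)\S'), a set containing E\S, and
   independence in N/B implies independence in N/C whenever C is a subset of B.
   So H stays independent in N.S, and each I + x (I a subset of H) dependent in
   N.S was already dependent in (N/A).S'; thus if H spanned N.S it would span (N/A).S'.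
   The monotonicity in the contracted set holds because independence in N/B does not
   depend on the chosen base of B: if K + W is independent (K, W disjoint) and an
   independent V is spanned by W, then K + V is independent.  For finitary N this
   reduces, through finite supports of spans, to exchange counting on finite sets. *)

Set Implicit Arguments.
Unset Strict Implicit.

Definition asbool (P : Prop) : bool :=
  if excluded_middle_informative P then true else false.

Lemma asboolE (P : Prop) : asbool P = true <-> P.
Proof.
  unfold asbool; destruct (excluded_middle_informative P); split; auto; discriminate.
Qed.

Lemma negb_asbool (P : Prop) : negb (asbool P) = asbool (~ P).
Proof.
  unfold asbool.
  destruct (excluded_middle_informative P), (excluded_middle_informative (~ P)); tauto.
Qed.

Lemma in_filter_asbool (A : Type) (P : A -> Prop) (l : list A) (x : A) :
  In x (filter (fun y => asbool (P y)) l) <-> In x l /\ P x.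
Proof. rewrite filter_In, asboolE; tauto. Qed.

Definition eq_classic {A : Type} (x y : A) : {x = y} + {x <> y} :=
  excluded_middle_informative (x = y).

Lemma length_filter_notin_lt (A : Type) (l1 l2 : list A) :
  NoDup l1 -> NoDup l2 -> length l1 < length l2 ->
  length (filter (fun x => asbool (~ In x l2)) l1) <
  length (filter (fun x => asbool (~ In x l1)) l2).
Proof.
  intros nd1 nd2 lt12.
  assert (common : length (filter (fun x => asbool (In x l2)) l1) =
                   length (filter (fun x => asbool (In x l1)) l2)).
  { apply PeanoNat.Nat.le_antisymm; apply NoDup_incl_length;
      try (apply NoDup_filter; assumption);
      intros x; rewrite !in_filter_asbool; tauto. }
  pose proof (filter_length (fun x => asbool (In x l2)) l1) as split1.
  pose proof (filter_length (fun x => asbool (In x l1)) l2) as split2.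
  rewrite (filter_ext _ _ (fun x => negb_asbool (In x l2))) in split1.
  rewrite (filter_ext _ _ (fun x => negb_asbool (In x l1))) in split2.
  lia.
Qed.

Definition Lset (T : Type) (l : list T) : pset T := fun x => In x l.

Lemma span_mono (T : Type) (N : setsys T) (X Y : pset T) :
  sub X Y -> sub (span N X) (span N Y).
Proof.
  intros sXY x [Xx | [gx [I [sIX rest]]]]; [left; auto | right].
  split; [exact gx |]. exists I; split; [intros y Iy; apply sXY, sIX, Iy | exact rest].
Qed.

Lemma ground_dotrestr (T : Type) (N : setsys T) (S : pset T) (x : T) :
  ground (dotrestr N S) x <-> ground N x /\ S x.
Proof.
  split.
  - intros [gx nS]; split; [exact gx |]. apply NNPP; intros nSx; exact (nS (conj gx nSx)).
  - intros [gx Sx]; split; [exact gx | intros [_ nSx]; exact (nSx Sx)].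
Qed.

Lemma ground_dotrestr_contraction_sub (T : Type) (N : setsys T) (A S' S : pset T) :
  sub S' S -> sub (ground (dotrestr (contraction N A) S')) (ground (dotrestr N S)).
Proof.
  intros sS x gx. apply (ground_dotrestr (contraction N A)) in gx as [[gx _] S'x].
  apply ground_dotrestr; split; [exact gx | apply sS, S'x].
Qed.

Lemma contraction_indep_subset (T : Type) (N : setsys T) (A : pset T) :
  (forall I J, indep N J -> sub I J -> indep N I) ->
  forall I J, indep (contraction N A) J -> sub I J -> indep (contraction N A) I.
Proof.
  intros closedN I J [sJ [B [maxB indJB]]] sIJ.
  split; [intros x Ix; apply sJ, sIJ, Ix |].
  exists B; split; [exact maxB |]. apply closedN with (setU J B); [exact indJB |].
  intros x [Ix | Bx]; [left; apply sIJ, Ix | right; exact Bx].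
Qed.

Lemma span_deletion_sub (T : Type) (M : setsys T) (A H : pset T) :
  sub (span (deletion M A) H) (span M H).
Proof.
  intros x [Hx | [gx [I [sIH [[sI indI] depIx]]]]]; [left; exact Hx | right].
  split; [exact (proj1 gx) |]. exists I; split; [exact sIH | split; [exact indI |]].
  intros indIx; apply depIx; split; [| exact indIx].
  intros y [Iy | ->]; [apply sI, Iy | exact gx].
Qed.

Section Matroid.
Variables (T : Type) (N : setsys T).
Hypothesis N_matroid : is_matroid N.

Lemma indep_ground (I : pset T) : indep N I -> sub I (ground N).
Proof. exact (proj1 N_matroid I). Qed.

Lemma indep_subset (I J : pset T) : indep N J -> sub I J -> indep N I.
Proof. exact (proj1 (proj2 (proj2 N_matroid)) I J). Qed.

Lemma indep_augment (I B : pset T) :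
  indep N I -> ~ is_maximal (indep N) I -> is_maximal (indep N) B ->
  exists x, B x /\ ~ I x /\ indep N (add1 I x).
Proof. exact (proj1 (proj2 (proj2 (proj2 N_matroid))) I B). Qed.

Lemma indep_extend (I X : pset T) :
  indep N I -> sub I X -> sub X (ground N) ->
  exists J, is_maximal (fun J => indep N J /\ sub I J /\ sub J X) J.
Proof. exact (proj2 (proj2 (proj2 (proj2 N_matroid))) I X). Qed.

Lemma indep_empty : indep N (fun _ => False).
Proof. exact (proj1 (proj2 N_matroid)). Qed.

Lemma restriction_has_base (X : pset T) :
  sub X (ground N) -> exists J, is_maximal (fun J => indep N J /\ sub J X) J.
Proof.
  intros sX.
  destruct (indep_extend indep_empty (fun _ f => match f with end) sX) as [J [[indJ [_ sJX]] maxJ]].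
  exists J; split; [split; assumption |].
  intros Y [indY sYX]; apply maxJ; repeat split; [exact indY | intros _ [] | exact sYX].
Qed.

Lemma dep_add1_super (I J : pset T) (x : T) :
  ~ indep N (add1 I x) -> sub I J -> ~ indep N (add1 J x).
Proof.
  intros depI sIJ indJ; apply depI.
  apply indep_subset with (add1 J x); [exact indJ |].
  intros y [Iy | ->]; [left; apply sIJ, Iy | right; reflexivity].
Qed.

Lemma max_indep_spans (X J : pset T) (v : T) :
  is_maximal (fun J => indep N J /\ sub J X) J -> X v -> ground N v -> span N J v.
Proof.
  intros [[indJ sJX] maxJ] Xv gv.
  destruct (classic (J v)) as [Jv | nJv]; [left; exact Jv | right].
  split; [exact gv |]. exists J; split; [intros y Jy; exact Jy | split; [exact indJ |]].
  intros indJv; apply nJv.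
  apply (maxJ (add1 J v)); [| intros y Jy; left; exact Jy | right; reflexivity].
  split; [exact indJv |]. intros y [Jy | ->]; [apply sJX, Jy | exact Xv].
Qed.

Lemma base_exchange (B1 B2 : pset T) (a : T) :
  is_maximal (indep N) B1 -> is_maximal (indep N) B2 -> B1 a -> ~ B2 a ->
  exists y, B2 y /\ ~ B1 y /\ is_maximal (indep N) (add1 (fun x => B1 x /\ x <> a) y).
Proof.
  intros baseB1 baseB2 B1a nB2a.
  set (B1a' := fun x => B1 x /\ x <> a).
  assert (indB1a' : indep N B1a')
    by (apply indep_subset with B1; [apply baseB1 | intros x []; assumption]).
  assert (nmaxB1a' : ~ is_maximal (indep N) B1a').
  { intros [_ maxB1a']. destruct (maxB1a' B1 (proj1 baseB1) (fun x H => proj1 H) a B1a).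
    auto. }
  destruct (indep_augment indB1a' nmaxB1a' baseB2) as [y [B2y [nB1a'y indy]]].
  assert (nB1y : ~ B1 y).
  { intros B1y; apply nB1a'y; split; [exact B1y | intros ->; exact (nB2a B2y)]. }
  exists y; split; [exact B2y | split; [exact nB1y |]].
  destruct (classic (is_maximal (indep N) (add1 B1a' y))) as [maxy | nmaxy]; [exact maxy |].
  exfalso.
  destruct (indep_augment indy nmaxy baseB1) as [z [B1z [nz indz]]].
  assert (za : z = a) by (apply NNPP; intros nza; apply nz; left; split; assumption).
  subst z. apply nB1y.
  assert (sB1 : sub (add1 (add1 B1a' y) a) B1).
  { apply (proj2 baseB1 _ indz). intros x B1x.
    destruct (classic (x = a)) as [-> | nxa]; [right; reflexivity | left; left; split; assumption]. }
  apply sB1; left; right; reflexivity.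
Qed.

Lemma base_diff_length (B2 : pset T) : is_maximal (indep N) B2 ->
  forall (l : list T) (B1 : pset T), is_maximal (indep N) B1 -> NoDup l ->
  (forall x, B1 x /\ ~ B2 x <-> In x l) ->
  forall m, NoDup m -> (forall x, In x m -> B2 x /\ ~ B1 x) -> length m <= length l.
Proof.
  intros baseB2. induction l as [| a l IH]; intros B1 baseB1 ndl enum m ndm inm.
  - destruct m as [| b m]; [reflexivity | exfalso].
    destruct (inm b (or_introl eq_refl)) as [B2b nB1b]. apply nB1b.
    apply (proj2 baseB1 B2 (proj1 baseB2)); [| exact B2b].
    intros x B1x; apply NNPP; intros nB2x; exact (proj1 (enum x) (conj B1x nB2x)).
  - destruct (proj2 (enum a) (or_introl eq_refl)) as [B1a nB2a].
    destruct (base_exchange baseB1 baseB2 B1a nB2a) as [y [B2y [nB1y baseB1']]].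
    inversion ndl as [| ? ? nla ndl']; subst.
    pose (m' := filter (fun x => asbool (x <> y)) m).
    assert (len_m' : length m' <= length l).
    { apply (IH _ baseB1' ndl').
      - intros x; split.
        + intros [[[B1x xa] | ->] nB2x]; [| contradiction].
          destruct (proj1 (enum x) (conj B1x nB2x)); [congruence | assumption].
        + intros lx. assert (xa : x <> a) by (intros ->; contradiction).
          destruct (proj2 (enum x) (or_intror lx)) as [B1x nB2x].
          split; [left; split |]; assumption.
      - apply NoDup_filter, ndm.
      - intros x m'x. apply in_filter_asbool in m'x as [mx xy].
        destruct (inm x mx) as [B2x nB1x].
        split; [exact B2x | intros [[B1x _] | ->]; contradiction]. }
    assert (length m <= length (y :: m')).
    { apply NoDup_incl_length; [exact ndm |]. intros x mx.
      destruct (classic (x = y)) as [-> | xy]; [left; reflexivity |].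
      right; apply in_filter_asbool; split; assumption. }
    simpl in *; lia.
Qed.

Lemma indep_extend_base (I : pset T) :
  indep N I -> exists B, is_maximal (indep N) B /\ sub I B.
Proof.
  intros indI.
  destruct (indep_extend indI (indep_ground indI) (fun x gx => gx))
    as [B [[indB [sIB _]] maxB]].
  exists B; split; [split; [exact indB |] | exact sIB].
  intros Y indY sBY. apply maxB; [| exact sBY].
  split; [exact indY | split; [intros x Ix; apply sBY, sIB, Ix | apply indep_ground, indY]].
Qed.

Lemma max_indep_in_base_sup (I X B J : pset T) :
  is_maximal (indep N) B -> sub B X ->
  is_maximal (fun J => indep N J /\ sub I J /\ sub J X) J -> is_maximal (indep N) J.
Proof.
  intros baseB sBX [[indJ [sIJ sJX]] maxJ].
  destruct (classic (is_maximal (indep N) J)) as [baseJ | nbaseJ]; [exact baseJ | exfalso].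
  destruct (indep_augment indJ nbaseJ baseB) as [x [Bx [nJx indJx]]].
  apply nJx, (maxJ (add1 J x)); [| intros y Jy; left; exact Jy | right; reflexivity].
  split; [exact indJx | split; [intros y Iy; left; apply sIJ, Iy |]].
  intros y [Jy | ->]; [apply sJX, Jy | apply sBX, Bx].
Qed.

Lemma indep_augment_finite (li lj : list T) :
  NoDup li -> NoDup lj -> indep N (Lset li) -> indep N (Lset lj) -> length li < length lj ->
  exists x, In x lj /\ ~ In x li /\ indep N (add1 (Lset li) x).
Proof.
  intros ndi ndj indi indj ltij. apply NNPP; intros noaug.
  destruct (indep_extend_base indj) as [BJ [baseBJ sjBJ]].
  assert (sX : sub (setU (Lset li) BJ) (ground N)).
  { intros x [lix | BJx];
      [apply (indep_ground indi), lix | apply (indep_ground (proj1 baseBJ)), BJx]. }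
  destruct (indep_extend indi (fun x lix => or_introl lix) sX) as [BI maxBI].
  pose proof (max_indep_in_base_sup baseBJ (fun x BJx => or_intror BJx) maxBI) as baseBI.
  destruct maxBI as [[indBI [siBI sBIX]] _].
  assert (le : length (filter (fun x => asbool (~ In x li)) lj) <=
               length (filter (fun x => asbool (~ BJ x)) li)).
  { apply (base_diff_length baseBJ baseBI); try (apply NoDup_filter; assumption).
    - intros x; rewrite in_filter_asbool; split.
      + intros [BIx nBJx]. destruct (sBIX x BIx); [split |]; tauto.
      + intros [lix nBJx]; split; [apply siBI, lix | exact nBJx].
    - intros x; rewrite in_filter_asbool; intros [ljx nlix]; split; [apply sjBJ, ljx |].
      intros BIx; apply noaug; exists x; split; [exact ljx | split; [exact nlix |]].
      apply indep_subset with BI; [exact indBI |].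
      intros y [liy | ->]; [apply siBI, liy | exact BIx]. }
  assert (le' : length (filter (fun x => asbool (~ BJ x)) li) <=
                length (filter (fun x => asbool (~ In x lj)) li)).
  { apply NoDup_incl_length; [apply NoDup_filter, ndi |].
    intros x; rewrite !in_filter_asbool. intros [lix nBJx]; split; [exact lix |].
    intros ljx; apply nBJx, sjBJ, ljx. }
  pose proof (length_filter_notin_lt ndi ndj ltij). lia.
Qed.

Lemma greedy_extend (L : list T) : forall Y0 : list T,
  NoDup Y0 -> indep N (Lset Y0) ->
  exists Y, incl Y0 Y /\ incl Y (Y0 ++ L) /\ NoDup Y /\ indep N (Lset Y) /\
    forall x, In x L -> ~ In x Y -> ~ indep N (add1 (Lset Y) x).
Proof.
  induction L as [| a L IH]; intros Y0 ndY0 indY0.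
  - exists Y0. rewrite app_nil_r.
    repeat split; [apply incl_refl | apply incl_refl | exact ndY0 | exact indY0 | intros x []].
  - destruct (classic (~ In a Y0 /\ indep N (add1 (Lset Y0) a))) as [[nY0a indY0a] | stuck].
    + assert (ind' : indep N (Lset (a :: Y0))).
      { apply indep_subset with (add1 (Lset Y0) a); [exact indY0a |].
        intros x [-> | Y0x]; [right | left]; auto. }
      destruct (IH (a :: Y0) (NoDup_cons _ nY0a ndY0) ind')
        as [Y [inclY0 [inclY [ndY [indY maxY]]]]].
      exists Y; repeat split; [| | exact ndY | exact indY |].
      * intros x Y0x; apply inclY0; right; exact Y0x.
      * intros x Yx. apply inclY in Yx. simpl in Yx. rewrite !in_app_iff in *. simpl. tauto.
      * intros x [<- | Lx] nYx; [| exact (maxY x Lx nYx)].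
        exfalso; apply nYx, inclY0; left; reflexivity.
    + destruct (IH Y0 ndY0 indY0) as [Y [inclY0 [inclY [ndY [indY maxY]]]]].
      exists Y; repeat split; [exact inclY0 | | exact ndY | exact indY |].
      * intros x Yx. apply inclY in Yx. rewrite !in_app_iff in *. simpl. tauto.
      * intros x [<- | Lx] nYx; [| exact (maxY x Lx nYx)].
        apply dep_add1_super with (Lset Y0); [| exact inclY0].
        intros indY0a; apply stuck.
        split; [intros Y0a; exact (nYx (inclY0 _ Y0a)) | exact indY0a].
Qed.

Lemma indep_app_of_span_finite (lk lw lv : list T) :
  NoDup lk -> NoDup lw -> NoDup lv ->
  indep N (Lset (lk ++ lw)) -> indep N (Lset lv) -> (forall x, In x lk -> ~ In x lw) ->
  (forall v, In v lv -> span N (Lset lw) v) ->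
  indep N (Lset (lk ++ lv)).
Proof.
  (* Extend lv greedily by lw to Y; since lw spans lv, |Y| <= |lw|.  Extend Y greedily
     by lk to Z.  An element of lk missing from Z would give |Z| < |lk ++ lw|, and the
     augmenting element from lk ++ lw would contradict one of the two greedy steps. *)
  intros ndk ndw ndv indkw indv disj spanv.
  assert (indw : indep N (Lset lw))
    by (apply indep_subset with (Lset (lk ++ lw));
        [exact indkw | intros x wx; apply in_app_iff; right; exact wx]).
  assert (dep_on_w : forall v, In v lv -> ~ In v lw -> ~ indep N (add1 (Lset lw) v)).
  { intros v lvv nwv. destruct (spanv v lvv) as [wv | [_ [I [sI [_ depI]]]]]; [contradiction |].
    exact (dep_add1_super depI sI). }
  destruct (greedy_extend lw ndv indv) as [Y [inclvY [inclY [ndY [indY maxY]]]]].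
  assert (lenY : length Y <= length lw).
  { destruct (Compare_dec.le_lt_dec (length Y) (length lw)) as [le | lt]; [exact le | exfalso].
    destruct (indep_augment_finite ndw ndY indw indY lt) as [y [Yy [nwy indwy]]].
    apply inclY, in_app_iff in Yy as [lvy | wy]; [exact (dep_on_w y lvy nwy indwy) | contradiction]. }
  destruct (greedy_extend lk ndY indY) as [Z [inclYZ [inclZ [ndZ [indZ maxZ]]]]].
  apply indep_subset with (Lset Z); [exact indZ |].
  intros x kvx. apply in_app_iff in kvx as [kx | vx]; [| apply inclYZ, inclvY, vx].
  apply NNPP; intros nZx.
  assert (lenZ : length Z <= length (Y ++ remove eq_classic x lk)).
  { apply NoDup_incl_length; [exact ndZ |]. intros z Zz.
    apply in_app_iff. destruct (in_app_or _ _ _ (inclZ z Zz)) as [Yz | kz]; [left; exact Yz | right].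
    apply in_in_remove; [intros ->; exact (nZx Zz) | exact kz]. }
  pose proof (remove_length_lt eq_classic lk x kx).
  rewrite length_app in lenZ.
  destruct (indep_augment_finite (lj := lk ++ lw) ndZ (NoDup_app ndk ndw disj) indZ indkw)
    as [z [kwz [nZz indZz]]]; [rewrite length_app; lia |].
  apply in_app_iff in kwz as [kz | wz]; [exact (maxZ z kz nZz indZz) |].
  apply (maxY z wz (fun Yz => nZz (inclYZ z Yz))).
  apply indep_subset with (add1 (Lset Z) z); [exact indZz |].
  intros y [Yy | ->]; [left; apply inclYZ, Yy | right; reflexivity].
Qed.

Lemma contraction_max_spans (A X J0 J1 : pset T) (v : T) :
  is_maximal (fun J => indep N J /\ sub J A) J0 -> sub X (setD (ground N) A) ->
  is_maximal (fun J => indep (contraction N A) J /\ sub J X) J1 ->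
  indep N (setU J1 J0) -> X v -> span N (setU J1 J0) v.
Proof.
  intros maxJ0 sX [[_ sJ1X] maxJ1] indJ Xv.
  destruct (classic (J1 v)) as [J1v | nJ1v]; [left; left; exact J1v | right].
  split; [exact (proj1 (sX v Xv)) |].
  exists (setU J1 J0); split; [intros y Jy; exact Jy | split; [exact indJ |]].
  intros indJv; apply nJ1v.
  assert (sJ1vX : sub (add1 J1 v) X) by (intros y [J1y | ->]; [apply sJ1X, J1y | exact Xv]).
  apply (maxJ1 (add1 J1 v)); [| intros y J1y; left; exact J1y | right; reflexivity].
  split; [split | exact sJ1vX].
  - intros y J1vy; apply sX, sJ1vX, J1vy.
  - exists J0; split; [exact maxJ0 |]. apply indep_subset with (add1 (setU J1 J0) v); [exact indJv |].
    intros y [[J1y | ->] | J0y]; [left; left | right | left; right]; auto.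
Qed.

End Matroid.

Section Finitary.
Variables (T : Type) (N : setsys T).
Hypothesis N_finitary : finitary_matroid N.
Let N_matroid : is_matroid N := proj1 N_finitary.

Lemma dep_finite_witness (X : pset T) :
  sub X (ground N) -> ~ indep N X ->
  exists l, (forall x, In x l -> X x) /\ ~ indep N (Lset l).
Proof.
  intros sX depX. apply NNPP; intros allfin. apply depX, (proj2 N_finitary _ sX).
  intros F sFX [l Fl]. apply NNPP; intros depF. apply allfin.
  exists (filter (fun x => asbool (F x)) l); split.
  - intros x lx; apply in_filter_asbool in lx; apply sFX; tauto.
  - intros indl; apply depF.
    apply indep_subset with (Lset (filter (fun x => asbool (F x)) l)); [exact N_matroid | exact indl |].
    intros x Fx; apply in_filter_asbool; split; [apply Fl |]; exact Fx.
Qed.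

Lemma span_finite_support (W : pset T) (v : T) :
  span N W v -> exists lw, (forall x, In x lw -> W x) /\ span N (Lset lw) v.
Proof.
  intros [Wv | [gv [I [sIW [indI depIv]]]]].
  - exists (v :: nil); split; [intros x [<- | []]; exact Wv | left; left; reflexivity].
  - assert (sIv : sub (add1 I v) (ground N))
      by (intros x [Ix | ->]; [apply (indep_ground N_matroid indI), Ix | exact gv]).
    destruct (dep_finite_witness sIv depIv) as [l [sl depl]].
    set (lw := filter (fun x => asbool (I x)) l).
    exists lw; split; [intros x lwx; apply in_filter_asbool in lwx; apply sIW; tauto |].
    right; split; [exact gv |]. exists (Lset lw); split; [intros x lwx; exact lwx | split].
    + apply indep_subset with I; [exact N_matroid | exact indI |].
      intros x lwx; apply in_filter_asbool in lwx; tauto.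
    + intros indlwv; apply depl.
      apply indep_subset with (add1 (Lset lw) v); [exact N_matroid | exact indlwv |].
      intros x lx. destruct (sl x lx) as [Ix | ->]; [| right; reflexivity].
      left; apply in_filter_asbool; split; assumption.
Qed.

Lemma span_finite_support_list (W : pset T) (lv : list T) :
  (forall v, In v lv -> span N W v) ->
  exists lw, (forall x, In x lw -> W x) /\ forall v, In v lv -> span N (Lset lw) v.
Proof.
  induction lv as [| v lv IH]; intros spanlv.
  - exists nil; split; intros _ [].
  - destruct IH as [lw [sW spanW]]; [intros u lvu; apply spanlv; right; exact lvu |].
    destruct (span_finite_support (spanlv v (or_introl eq_refl))) as [lw' [sW' spanv]].
    exists (lw' ++ lw); split.
    + intros x x_in; apply in_app_iff in x_in as [x_in | x_in]; [apply sW' | apply sW]; exact x_in.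
    + intros u [<- | lvu].
      * apply (span_mono (X := Lset lw')); [| exact spanv].
        intros x x_in; apply in_app_iff; left; exact x_in.
      * apply (span_mono (X := Lset lw)); [intros x x_in; apply in_app_iff; right; exact x_in |].
        apply spanW, lvu.
Qed.

Lemma indep_union_of_span (K W V : pset T) :
  indep N (setU K W) -> indep N V -> (forall x, K x -> ~ W x) -> sub V (span N W) ->
  indep N (setU K V).
Proof.
  intros indKW indV disjKW sVW.
  apply (proj2 N_finitary).
  { intros x [Kx | Vx]; [apply (indep_ground N_matroid indKW); left; exact Kx |].
    apply (indep_ground N_matroid indV), Vx. }
  intros F sF [l Fl].
  set (lk := nodup eq_classic (filter (fun x => asbool (K x)) l)).
  set (lv := nodup eq_classic (filter (fun x => asbool (V x)) l)).
  assert (in_lk : forall x, In x lk <-> In x l /\ K x)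
    by (intros x; unfold lk; rewrite nodup_In, in_filter_asbool; tauto).
  assert (in_lv : forall x, In x lv <-> In x l /\ V x)
    by (intros x; unfold lv; rewrite nodup_In, in_filter_asbool; tauto).
  destruct (span_finite_support_list (W := W) (lv := lv)) as [lw0 [sW spanlw0]].
  { intros v lvv; apply sVW, in_lv, lvv. }
  set (lw := nodup eq_classic lw0).
  assert (in_lw : forall x, In x lw <-> In x lw0) by (intros x; apply nodup_In).
  assert (indkv : indep N (Lset (lk ++ lv))).
  { apply (indep_app_of_span_finite N_matroid (lw := lw)); try apply NoDup_nodup.
    - apply (indep_subset N_matroid indKW). intros x kwx.
      apply in_app_iff in kwx as [kx | wx]; [left; apply in_lk, kx | right; apply sW, in_lw, wx].
    - apply (indep_subset N_matroid indV). intros x vx; apply in_lv, vx.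
    - intros x kx wx. exact (disjKW x (proj2 (proj1 (in_lk x) kx)) (sW x (proj1 (in_lw x) wx))).
    - intros v lvv.
      apply (span_mono (X := Lset lw0)); [intros x; apply in_lw | apply spanlw0, lvv]. }
  apply (indep_subset N_matroid indkv). intros x Fx. apply in_app_iff.
  destruct (sF x Fx) as [Kx | Vx]; [left; apply in_lk | right; apply in_lv]; split; auto.
Qed.

Lemma indep_dotrestr_contraction (A S' S K : pset T) :
  sub S' S -> indep (dotrestr (contraction N A) S') K -> indep (dotrestr N S) K.
Proof.
  intros sS [sK [J1 [maxJ1 [_ [J0 [maxJ0 indKJ]]]]]].
  split; [exact (fun x Kx => ground_dotrestr_contraction_sub sS (sK x Kx)) |].
  destruct (restriction_has_base N_matroid (X := setD (ground N) S) (fun x gx => proj1 gx))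
    as [J maxJ].
  exists J; split; [exact maxJ |].
  assert (K_in : forall x, K x -> ~ A x /\ S' x).
  { intros x Kx.
    destruct (proj1 (ground_dotrestr (contraction N A) S' x) (sK x Kx)) as [[_ nAx] S'x].
    split; assumption. }
  assert (indJ10 : indep N (setU J1 J0)).
  { apply (indep_subset N_matroid indKJ).
    intros x [J1x | J0x]; [left; right | right]; assumption. }
  apply indep_union_of_span with (setU J1 J0).
  - apply (indep_subset N_matroid indKJ).
    intros x [Kx | [J1x | J0x]]; [left; left | left; right | right]; assumption.
  - exact (proj1 (proj1 maxJ)).
  - intros x Kx [J1x | J0x].
    + destruct maxJ1 as [[_ sJ1] _]. exact (proj2 (sJ1 x J1x) (proj2 (K_in x Kx))).
    + destruct maxJ0 as [[_ sJ0] _]. exact (proj1 (K_in x Kx) (sJ0 x J0x)).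
  - intros v Jv. destruct (proj2 (proj1 maxJ) v Jv) as [gv nSv].
    destruct (classic (A v)) as [Av | nAv].
    + apply (span_mono (X := J0)); [intros x J0x; right; exact J0x |].
      exact (max_indep_spans maxJ0 Av gv).
    + apply (contraction_max_spans N_matroid maxJ0 (fun x Xx => proj1 Xx) maxJ1 indJ10).
      split; [split; assumption | intros S'v; exact (nSv (sS v S'v))].
Qed.

End Finitary.

Theorem mainTheorem5 (T : Type) (M N : setsys T) (A : pset T) :
  finitary_matroid M -> finitary_matroid N ->
  (forall x, ground M x <-> ground N x) ->
  sub A (ground M) ->
  forall H : pset T,
    hindrance (deletion M A) (contraction N A) H -> hindrance M N H.
Proof.
  intros _ N_finitary _ _ H [indH nspanH].
  pose proof (span_deletion_sub (M := M) (A := A) (H := H)) as sS.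
  split; [exact (indep_dotrestr_contraction N_finitary sS indH) |].
  intros spanH; apply nspanH; intros x gx.
  destruct (spanH x (ground_dotrestr_contraction_sub sS gx)) as [Hx | [_ [I [sIH [indI depIx]]]]];
    [left; exact Hx | right].
  split; [exact gx |]. exists I; split; [exact sIH | split].
  - apply contraction_indep_subset with H; [| exact indH | exact sIH].
    apply contraction_indep_subset, (indep_subset (proj1 N_finitary)).
  - intros indIx; exact (depIx (indep_dotrestr_contraction N_finitary sS indIx)).
Qed.
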